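(* Let $A\in\mathbb{R}^{n\times n}$ be irreducible and nonnegative. Then $r\big((1-t)A+tA^{\top}\big)$ is constant in $t\in[0,1]$ if and only if the Perron vector of $A+A^{\top}$ lies in the null space of $A-A^{\top}$.
   Context: $r(M)$ denotes the spectral radius of $M$. The Perron vector of an irreducible nonnegative matrix is its positive eigenvector (unique up to scaling) for the eigenvalue equal to its spectral radius. *)

From HB Require Import structures.
From mathcomp Require Import all_boot all_order all_algebra.
From mathcomp Require Import complex.
Set Implicit Arguments. Unset Strict Implicit. Unset Printing Implicit Defensive.
Import Order.TTheory GRing.Theory Num.Theory.
Local Open Scope ring_scope.

(* Real matrices are taken over an arbitrary real closed field R
   (e.g. the reals); complex eigenvalues live in R[i] = complex R. *)

(* The (complex) eigenvalues of M, listed with algebraic multiplicity: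
   the roots of the characteristic polynomial of M viewed over R[i]. *)
Definition eigenvalues_C (R : rcfType) (n : nat) (M : 'M[R]_n) : seq R[i] :=
  sval (closed_field_poly_normal (char_poly (map_mx (real_complex R) M))).

Definition spectral_radius (R : rcfType) (n : nat) (M : 'M[R]_n) : R :=
  \big[Num.max/0]_(z <- eigenvalues_C M) Normc.normc z.

Definition nonneg_mx (R : rcfType) (n : nat) (M : 'M[R]_n) : Prop :=
  forall i j, 0 <= M i j.

(* Irreducibility: there is no nonempty proper subset S of indices with
   M i j = 0 for all i in S, j not in S (equivalently, no permutation
   similarity brings M to block upper triangular form). *)
Definition irreducible_mx (R : rcfType) (n : nat) (M : 'M[R]_n) : Prop :=
  forall S : {set 'I_n}, S != set0 -> S != setT ->
    exists i, exists j, [/\ i \in S, j \notin S & M i j != 0].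

Definition perron_vector (R : rcfType) (n : nat) (M : 'M[R]_n) (x : 'cV[R]_n) : Prop :=
  (forall i, 0 < x i 0) /\ M *m x = spectral_radius M *: x.

From HB Require Import structures.
From mathcomp Require Import all_boot all_order all_algebra.
From mathcomp Require Import complex.
From mathcomp Require Import ring.
Import Order.TTheory GRing.Theory Num.Theory.
Local Open Scope ring_scope.

Set Implicit Arguments. Unset Strict Implicit. Unset Printing Implicit Defensive.

(* Write M = A + A^T and let x be its Perron vector, r(M) = 2a.  The matrices
   B_t = (1 - t) A + t A^T are nonnegative and B_(1/2) = M / 2.

   If (A - A^T) x = 0, then A x = A^T x = a x, so x is a positive eigenvector
   of every B_t and r(B_t) = a.

   Conversely, if r(B_t) is constant then r(A) = r(B_(1/2)) = a, and the
   moduli of an eigenvector of A for an eigenvalue of maximal modulus give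
   w >= 0, w <> 0 with a w <= w A.  For q = w / x the identity
     sum_ij A_ij x_i x_j (q_i - q_j)^2 + 2 sum_i w_i ((w A)_i - a w_i) = 0
   forces both (nonnegative) sums to vanish; irreducibility makes q constant,
   so w is a positive multiple of x^T, whence x^T A = a x^T, i.e.
   A^T x = a x = A x.

   The Perron vector of the symmetric matrix M comes from the spectral
   theorem: the moduli of an eigenvector for the largest eigenvalue still
   attain the maximal Rayleigh quotient, hence form an eigenvector, which is
   positive by irreducibility. *)

Lemma char_poly_trmx (F : comNzRingType) n (A : 'M[F]_n) :
  char_poly A^T = char_poly A.
Proof.
rewrite /char_poly -det_tr; congr (\det _).
by apply/matrixP => i j; rewrite !mxE eq_sym.
Qed.

Lemma eigenvalue_trmx (F : fieldType) n (A : 'M[F]_n) a :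
  eigenvalue A^T a = eigenvalue A a.
Proof. by rewrite !eigenvalue_root_char char_poly_trmx. Qed.

Section NonnegMatrix.
Variables (R : rcfType) (n : nat).
Implicit Types (A B : 'M[R]_n).

Lemma nonneg_mxD A B : nonneg_mx A -> nonneg_mx B -> nonneg_mx (A + B).
Proof. by move=> A0 B0 i j; rewrite mxE addr_ge0. Qed.

Lemma nonneg_mxZ a A : 0 <= a -> nonneg_mx A -> nonneg_mx (a *: A).
Proof. by move=> a0 A0 i j; rewrite mxE mulr_ge0. Qed.

Lemma nonneg_trmx A : nonneg_mx A -> nonneg_mx A^T.
Proof. by move=> A0 i j; rewrite mxE. Qed.

Lemma nonneg_mx_trmx_comb t A : 0 <= t <= 1 -> nonneg_mx A ->
  nonneg_mx ((1 - t) *: A + t *: A^T).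
Proof.
case/andP => t_ge0 t_le1 A0.
apply: nonneg_mxD; apply: nonneg_mxZ => //; first by rewrite subr_ge0.
exact: nonneg_trmx.
Qed.

Lemma irreducible_mx_closed A (S : {set 'I_n}) : irreducible_mx A -> S != set0 ->
  (forall i j, i \in S -> A i j != 0 -> j \in S) -> S = setT.
Proof.
move=> irrA S0 closedS; apply/eqP; apply: contraT => ST.
have [i [j [iS jS Aij]]] := irrA S S0 ST.
by rewrite (closedS i j iS Aij) in jS.
Qed.

Lemma irreducible_mxD A B : nonneg_mx A -> nonneg_mx B ->
  irreducible_mx A -> irreducible_mx (A + B).
Proof.
move=> A0 B0 irrA S S0 ST; have [i [j [iS jS Aij]]] := irrA S S0 ST.
exists i, j; split => //; rewrite mxE lt0r_neq0 // ltr_wpDr //.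
by rewrite lt_def Aij A0.
Qed.

End NonnegMatrix.

Section SpectralRadius.
Variables (R : rcfType) (n : nat).
Local Notation toC := (real_complex R).
Local Notation normc := (@Normc.normc R).
Implicit Types (B : 'M[R]_n) (x : 'cV[R]_n) (w : 'rV[R]_n).

Definition subinvariant B (a : R) w :=
  [/\ forall i, 0 <= w 0 i, w != 0 & forall j, a * w 0 j <= (w *m B) 0 j].

Lemma normc_ge0 (z : R[i]) : 0 <= normc z.
Proof. by case: z => a b; rewrite sqrtr_ge0. Qed.

Lemma normc_real (c : R) : normc (toC c) = `|c|.
Proof. by rewrite /= expr0n /= addr0 sqrtr_sqr. Qed.

Lemma mem_eigenvalues_C B z :
  (z \in eigenvalues_C B) = eigenvalue (map_mx toC B) z.
Proof.
rewrite /eigenvalues_C eigenvalue_root_char; case: closed_field_poly_normal => s /= ->.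
by rewrite (eqP (char_poly_monic _)) scale1r root_prod_XsubC.
Qed.

Lemma spectral_radius_ge_eigen B c x : x != 0 -> B *m x = c *: x ->
  c <= spectral_radius B.
Proof.
move=> x0 Bx; have: eigenvalue B c.
  rewrite -eigenvalue_trmx; apply/eigenvalueP; exists x^T; last by rewrite trmx_eq0.
  by rewrite -trmx_mul Bx linearZ.
rewrite -(eigenvalue_map toC) -mem_eigenvalues_C => cB.
by apply: le_trans (ler_norm c) _; rewrite -normc_real; apply: le_bigmax_seq.
Qed.

Lemma exists_eigenvalue_ge B a : (0 < n)%N -> a <= spectral_radius B ->
  exists2 z, z \in eigenvalues_C B & a <= normc z.
Proof.
move=> n_gt0 a_le; have [a_gt0 | a_le0] := ltP 0 a.
  apply/hasP; apply: contraTT a_le => /hasPn normc_lt; rewrite -ltNge.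
  rewrite /spectral_radius big_seq; apply: bigmax_lt => // z zB.
  by rewrite ltNge; apply: normc_lt.
have [z] := eigenvalue_closed (map_mx toC B) n_gt0.
by rewrite -mem_eigenvalues_C => zB; exists z => //; apply: le_trans (normc_ge0 z).
Qed.

Lemma normc_eigenvector_subinvariant B z (v : 'rV[R[i]]_n) : nonneg_mx B ->
  v *m map_mx toC B = z *: v -> v != 0 -> subinvariant B (normc z) (map_mx normc v).
Proof.
move=> B0 vB v0; split => [i | | j]; rewrite ?mxE ?normc_ge0 //.
  have [j vj] := rV0Pn _ v0; apply/rV0Pn; exists j; rewrite mxE.
  by apply: contra vj => /eqP/Normc.eq0_normc ->.
rewrite -Normc.normcM.
have -> : z * v 0 j = (v *m map_mx toC B) 0 j by rewrite vB mxE.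
rewrite mxE -lecR rmorph_sum.
have -> : toC (normc (\sum_i v 0 i * (map_mx toC B) i j))
          = `|\sum_i v 0 i * (map_mx toC B) i j| by [].
apply: le_trans (ler_norm_sum _ _ _) _; apply: ler_sum => i _.
by rewrite !mxE normrM rmorphM (ger0_norm (x := toC (B i j))) ?ler0c.
Qed.

Lemma subinvariant_le_pos_eigen B a c w x : subinvariant B a w ->
  (forall i, 0 < x i 0) -> B *m x = c *: x -> a <= c.
Proof.
case=> w_ge0 /rV0Pn[j wj] wB x_gt0 Bx.
have wx_gt0 : 0 < (w *m x) 0 0.
  rewrite mxE (bigD1 j) //= ltr_pwDl ?sumr_ge0 // => [|i _].
    by rewrite mulr_gt0 // lt_def wj w_ge0.
  by rewrite mulr_ge0 // ltW.
rewrite -(ler_pM2r wx_gt0).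
have -> : c * (w *m x) 0 0 = (w *m B *m x) 0 0 by rewrite -mulmxA Bx -scalemxAr [RHS]mxE.
rewrite [in X in _ <= X]mxE mxE mulr_sumr; apply: ler_sum => i _.
by rewrite mulrA ler_wpM2r // ltW.
Qed.

Lemma spectral_radius_pos_eigen B c x : (0 < n)%N -> nonneg_mx B ->
  (forall i, 0 < x i 0) -> B *m x = c *: x -> spectral_radius B = c.
Proof.
move=> n_gt0 B0 x_gt0 Bx; apply/le_anti/andP; split; last first.
  apply: spectral_radius_ge_eigen Bx; apply/cV0Pn; exists (Ordinal n_gt0).
  by rewrite gt_eqF.
have c_ge0 : 0 <= c.
  pose i0 := Ordinal n_gt0; rewrite -(pmulr_lge0 _ (x_gt0 i0)).
  have -> : c * x i0 0 = (B *m x) i0 0 by rewrite Bx mxE.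
  by rewrite mxE sumr_ge0 // => j _; rewrite mulr_ge0 // ltW.
rewrite /spectral_radius big_seq; apply: bigmax_le => // z.
rewrite mem_eigenvalues_C => /eigenvalueP[v vB v0].
exact: subinvariant_le_pos_eigen (normc_eigenvector_subinvariant B0 vB v0) x_gt0 Bx.
Qed.

Lemma exists_subinvariant B a : (0 < n)%N -> nonneg_mx B ->
  a <= spectral_radius B -> exists w, subinvariant B a w.
Proof.
move=> n_gt0 B0 /(exists_eigenvalue_ge n_gt0)[z].
rewrite mem_eigenvalues_C => /eigenvalueP[v vB v_neq0] a_le.
have [w_ge0 w_neq0 wB] := normc_eigenvector_subinvariant B0 vB v_neq0.
exists (map_mx normc v); split => // j.
exact: le_trans (ler_wpM2r (w_ge0 j) a_le) (wB j).
Qed.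

End SpectralRadius.

Section Dirichlet.
Variables (R : rcfType) (n : nat) (A : 'M[R]_n) (a : R) (x : 'cV[R]_n).
Hypothesis x_neq0 : forall i, x i 0 != 0.
Hypothesis Ax : (A + A^T) *m x = (a *+ 2) *: x.

Lemma dirichlet_identity (u : 'rV[R]_n) (q := fun i => u 0 i / x i 0) :
  \sum_i \sum_j A i j * x i 0 * x j 0 * (q i - q j) ^+ 2
  + (\sum_i u 0 i * ((u *m A) 0 i - a * u 0 i)) *+ 2 = 0.
Proof.
have uq i : u 0 i = q i * x i 0 by rewrite divfK.
have Axi i : \sum_j (A i j + A j i) * x j 0 = a *+ 2 * x i 0.
  by have /colP/(_ i) := Ax; rewrite !mxE => <-; apply: eq_bigr => j _; rewrite !mxE.
have sum_sqr : \sum_i \sum_j A i j * x i 0 * x j 0 * (q i ^+ 2 + q j ^+ 2)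
               = (\sum_i a * u 0 i ^+ 2) *+ 2.
  rewrite -sumrMnl.
  under eq_bigr do (under eq_bigr do rewrite mulrDr; rewrite big_split /=).
  rewrite big_split /= [X in _ + X]exchange_big /= -big_split /=.
  apply: eq_bigr => i _; rewrite -big_split /= uq.
  transitivity (q i ^+ 2 * x i 0 * \sum_j (A i j + A j i) * x j 0).
    by rewrite mulr_sumr; apply: eq_bigr => j _; ring.
  by rewrite Axi; ring.
have sum_cross : \sum_i \sum_j A i j * x i 0 * x j 0 * (q i * q j)
                 = \sum_i u 0 i * (u *m A) 0 i.
  rewrite exchange_big; apply: eq_bigr => i _; rewrite mxE mulr_sumr.
  by apply: eq_bigr => j _; rewrite !uq; ring.
have -> : \sum_i \sum_j A i j * x i 0 * x j 0 * (q i - q j) ^+ 2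
          = \sum_i \sum_j A i j * x i 0 * x j 0 * (q i ^+ 2 + q j ^+ 2)
            - (\sum_i \sum_j A i j * x i 0 * x j 0 * (q i * q j)) *+ 2.
  rewrite -sumrMnl -sumrB; apply: eq_bigr => i _.
  rewrite -sumrMnl -sumrB; apply: eq_bigr => j _; ring.
rewrite sum_sqr sum_cross -mulrnBl -mulrnDl -sumrB -big_split /=.
by rewrite big1 ?mul0rn // => i _; ring.
Qed.

End Dirichlet.

Section Subinvariant.
Variables (R : rcfType) (n : nat) (A : 'M[R]_n) (a : R) (x : 'cV[R]_n) (w : 'rV[R]_n).
Hypotheses (A0 : nonneg_mx A) (irrA : irreducible_mx A) (x_gt0 : forall i, 0 < x i 0).
Hypotheses (Ax : (A + A^T) *m x = (a *+ 2) *: x) (w_sub : subinvariant A a w).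

Let q i := w 0 i / x i 0.

Lemma subinvariant_dirichlet_eq0 :
  (forall i j, A i j * x i 0 * x j 0 * (q i - q j) ^+ 2 = 0) /\
  (forall i, w 0 i * ((w *m A) 0 i - a * w 0 i) = 0).
Proof.
case: w_sub => w_ge0 _ wA.
have terms_ge0 i j : 0 <= A i j * x i 0 * x j 0 * (q i - q j) ^+ 2.
  by rewrite mulr_ge0 ?sqr_ge0 // !mulr_ge0 // ltW.
have gaps_ge0 i : 0 <= w 0 i * ((w *m A) 0 i - a * w 0 i).
  by rewrite mulr_ge0 // subr_ge0.
have /eqP := dirichlet_identity (fun i => lt0r_neq0 (x_gt0 i)) Ax w.
rewrite paddr_eq0 ?mulrn_wge0 ?sumr_ge0 // => [|i _]; last exact: sumr_ge0.
rewrite mulrn_eq0 /= => /andP[/eqP terms0 /eqP gaps0]; split => [i j | i].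
  have row0 k : \sum_l A k l * x k 0 * x l 0 * (q k - q l) ^+ 2 = 0.
    by apply: (psumr_eq0P _ terms0) => // k' _; apply: sumr_ge0.
  exact: (psumr_eq0P _ (row0 i)).
exact: (psumr_eq0P _ gaps0).
Qed.

Lemma subinvariant_proportional : exists2 c, 0 < c & forall i, w 0 i = c * x i 0.
Proof.
have [terms0 _] := subinvariant_dirichlet_eq0.
case: w_sub => w_ge0 /rV0Pn[j0 wj0] _.
have q_const : [set i | q i == q j0] = setT.
  apply: (irreducible_mx_closed irrA); first by apply/set0Pn; exists j0; rewrite inE.
  move=> i j; rewrite !inE => /eqP <- Aij; apply/eqP.
  have /eqP := terms0 i j.
  rewrite !mulf_eq0 (negbTE Aij) (gt_eqF (x_gt0 i)) (gt_eqF (x_gt0 j)) /= orbb.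
  by rewrite subr_eq0 => /eqP ->.
exists (q j0); first by rewrite divr_gt0 // lt_def wj0 w_ge0.
move=> i; have /setP/(_ i) := q_const; rewrite !inE => /eqP <-.
by rewrite divfK // lt0r_neq0.
Qed.

Lemma subinvariant_trmx_eigen : A^T *m x = a *: x.
Proof.
have [c c_gt0 wE] := subinvariant_proportional.
have [_ gaps0] := subinvariant_dirichlet_eq0.
apply/colP => i; apply: (mulfI (lt0r_neq0 c_gt0)).
have /eqP := gaps0 i; rewrite mulf_eq0 wE mulf_eq0 (gt_eqF c_gt0) (gt_eqF (x_gt0 i)).
rewrite /= subr_eq0 !mxE mulr_sumr mulrCA => /eqP <-.
by apply: eq_bigr => j _; rewrite !mxE wE mulrA mulrAC.
Qed.

End Subinvariant.

Section Rayleigh.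
Variables (C : numClosedFieldType) (n : nat).

Lemma dotmx_unitary (U : 'M[C]_n) (u v : 'rV[C]_n) : U \is unitarymx ->
  dotmx (u *m U) (v *m U) = dotmx u v.
Proof.
move=> /unitarymxP UU.
by rewrite !dotmxE trmx_mul map_mxM mulmxA -(mulmxA u) UU mulmx1.
Qed.

Lemma diag_mx_rayleigh_max (D c : 'rV[C]_n) d : (forall k, D 0 k <= d) ->
  d * dotmx c c <= dotmx (c *m diag_mx D) c -> c *m diag_mx D = d *: c.
Proof.
move=> D_le; pose gap k := (d - D 0 k) * (c 0 k * (c 0 k)^*).
have gap_ge0 k : 0 <= gap k by rewrite mulr_ge0 ?mul_conjC_ge0 ?subr_ge0.
have -> : dotmx (c *m diag_mx D) c = d * dotmx c c - \sum_k gap k.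
  rewrite !dotmxE !mxE mulr_sumr -sumrB; apply: eq_bigr => k _.
  by rewrite mul_mx_diag !mxE /gap; ring.
rewrite -subr_ge0 addrC addKr oppr_ge0 => gaps_le0.
have gaps0 : \sum_k gap k = 0 by apply/le_anti; rewrite gaps_le0 sumr_ge0.
apply/rowP => k; have /eqP : gap k = 0 by apply: (psumr_eq0P _ gaps0).
rewrite mulf_eq0 mul_conjC_eq0 subr_eq0 mul_mx_diag !mxE => /orP[/eqP <-|/eqP ->].
  by rewrite mulrC.
by rewrite mul0r mulr0.
Qed.

End Rayleigh.

Section Perron.
Variables (R : rcfType) (n : nat).
Local Notation toC := (real_complex R).
Local Notation normc := (@Normc.normc R).

Lemma hermitian_max_eigen (H : 'M[R[i]]_n) : (0 < n)%N -> H \is hermsymmx ->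
  exists d : R, (exists2 e : 'rV_n, e *m H = toC d *: e & e != 0) /\
    forall v, toC d * dotmx v v <= dotmx (v *m H) v -> v *m H = toC d *: v.
Proof.
move=> n_gt0 H_herm; have /orthomx_spectralP HE := hermitian_normalmx H_herm.
have P_unitary := spectral_unitarymx H; have P_unit := spectral_unit H.
have D_real := mxOverP (hermitian_spectral_diag_real H_herm) 0.
set P := spectralmx H in HE P_unitary P_unit; set D := spectral_diag H in HE D_real.
have [k0 _ k0_max] :=
  @arg_maxP _ _ _ (Ordinal n_gt0) xpredT (fun k => complex.Re (D 0 k)) isT.
have D_le k : D 0 k <= toC (complex.Re (D 0 k0)).
  by rewrite -(RRe_real (D_real k)) lecR; apply: k0_max.
have rowPV : row k0 P *m invmx P = delta_mx 0 k0 by rewrite -row_mul mulmxV // row1.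
exists (complex.Re (D 0 k0)); split.
  exists (row k0 P).
    rewrite HE !mulmxA rowPV RRe_real // rowE scalemxAl; congr (_ *m _).
    apply/rowP => k; rewrite mul_mx_diag !mxE.
    by rewrite eqxx /=; case: eqP => [->|_]; rewrite ?mul1r ?mulr1 ?mul0r ?mulr0.
  apply: contraTneq isT => P0; move: rowPV; rewrite P0 mul0mx.
  by move/matrixP/(_ 0 k0); rewrite !mxE !eqxx => /eqP; rewrite eq_sym oner_eq0.
move=> v; have vE : v = v *m invmx P *m P by rewrite mulmxKV.
have vH : v *m H = v *m invmx P *m diag_mx D *m P by rewrite {1}HE !mulmxA.
rewrite vH {1 2 4}vE !(dotmx_unitary _ _ P_unitary) => rayleigh_ge.
rewrite (diag_mx_rayleigh_max D_le rayleigh_ge).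
by rewrite -scalemxAl -vE.
Qed.

Lemma conj_real_complex (r : R) : (toC r)^* = toC r.
Proof. by rewrite conj_Creal // complex_real. Qed.

Lemma dotmx_real (u v : 'rV[R]_n) :
  dotmx (map_mx toC u) (map_mx toC v) = toC ((u *m v^T) 0 0).
Proof.
rewrite dotmxE !mxE rmorph_sum; apply: eq_bigr => j _.
by rewrite !mxE rmorphM conj_real_complex.
Qed.

Lemma perron_vector_exists (M : 'M[R]_n) : (0 < n)%N -> nonneg_mx M ->
  M^T = M -> irreducible_mx M -> exists x, perron_vector M x.
Proof.
move=> n_gt0 M0 M_sym irrM.
have M_herm : map_mx toC M \is hermsymmx.
  apply/is_hermitianmxP; rewrite expr0 scale1r; apply/matrixP => i j.
  by rewrite !mxE conj_real_complex -{1}M_sym mxE.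
have [d [[e eM e_neq0] d_max]] := hermitian_max_eigen n_gt0 M_herm.
have [w_ge0 w_neq0] := normc_eigenvector_subinvariant M0 eM e_neq0.
rewrite normc_real; set w := map_mx normc e in w_ge0 w_neq0 *; clearbody w => wM.
have wMd : w *m M = d *: w.
  apply: (@map_mx_inj _ _ toC); rewrite map_mxM map_mxZ; apply: d_max.
  rewrite -map_mxM !dotmx_real -rmorphM lecR [X in _ <= X]mxE mxE mulr_sumr.
  apply: ler_sum => j _; rewrite mxE mulrA; apply: ler_wpM2r; first exact: w_ge0.
  exact: le_trans (ler_wpM2r (w_ge0 j) (ler_norm d)) (wM j).
have w_gt0 : [set i | 0 < w 0 i] = setT.
  apply: (irreducible_mx_closed irrM).
    by have [j wj] := rV0Pn _ w_neq0; apply/set0Pn; exists j; rewrite inE lt_def wj w_ge0.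
  move=> i j; rewrite !inE => wi Mij; rewrite lt_def w_ge0 andbT.
  have : 0 < (w *m M) 0 j.
    rewrite mxE (bigD1 i) //= ltr_pwDl ?sumr_ge0 // => [|k _]; last by rewrite mulr_ge0.
    by rewrite mulr_gt0 // lt_def Mij M0.
  by rewrite wMd mxE => /lt0r_neq0; rewrite mulf_eq0 negb_or => /andP[].
exists w^T; split => [i|]; first by have /setP/(_ i) := w_gt0; rewrite !inE mxE.
have Mw : M *m w^T = d *: w^T by rewrite -{1}M_sym -trmx_mul wMd linearZ.
rewrite (spectral_radius_pos_eigen n_gt0 M0 _ Mw) // => i.
by have /setP/(_ i) := w_gt0; rewrite !inE mxE.
Qed.

End Perron.

Section TrmxCombination.
Variables (R : rcfType) (n : nat) (A : 'M[R]_n) (x : 'cV[R]_n).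
Hypotheses (n_gt0 : (0 < n)%N) (A0 : nonneg_mx A) (Px : perron_vector (A + A^T) x).
Let r := spectral_radius (A + A^T).

Lemma spectral_radius_trmx_half :
  spectral_radius ((1 - 2^-1) *: A + 2^-1 *: A^T) = r / 2.
Proof.
have [x_gt0 Mx] := Px; have -> : 1 - 2^-1 = 2^-1 :> R by field.
apply: spectral_radius_pos_eigen n_gt0 _ x_gt0 _.
  rewrite -scalerDr; apply: nonneg_mxZ; first by rewrite invr_ge0 ler0n.
  exact: nonneg_mxD A0 (nonneg_trmx A0).
by rewrite -scalerDr -scalemxAl Mx scalerA mulrC.
Qed.

Lemma spectral_radius_trmx_comb_null t : (A - A^T) *m x = 0 -> 0 <= t <= 1 ->
  spectral_radius ((1 - t) *: A + t *: A^T) = r / 2.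
Proof.
move=> /eqP; rewrite mulmxBl subr_eq0 => /eqP ATx t01; have [x_gt0 Mx] := Px.
have Ax : A *m x = (r / 2) *: x.
  rewrite mulrC -scalerA -Mx mulmxDl -ATx -mulr2n -scaler_nat scalerA.
  by rewrite mulVf ?pnatr_eq0 // scale1r.
apply: spectral_radius_pos_eigen n_gt0 (nonneg_mx_trmx_comb t01 A0) x_gt0 _.
by rewrite mulmxDl -!scalemxAl -ATx Ax !scalerA -scalerDl; congr (_ *: _); ring.
Qed.

Lemma perron_vector_trmx_null : irreducible_mx A -> r / 2 <= spectral_radius A ->
  (A - A^T) *m x = 0.
Proof.
move=> irrA half_le; have [x_gt0 Mx] := Px.
have Mx2 : (A + A^T) *m x = (r / 2 *+ 2) *: x by rewrite mulr2n -splitr.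
have [w w_sub] := exists_subinvariant n_gt0 A0 half_le.
have ATx := subinvariant_trmx_eigen A0 irrA x_gt0 Mx2 w_sub.
have Ax : A *m x = (r / 2) *: x.
  by apply: (addIr (A^T *m x)); rewrite -mulmxDl Mx2 ATx -scalerMnl mulr2n.
by rewrite mulmxBl Ax ATx subrr.
Qed.

End TrmxCombination.

Theorem theorem6 (R : rcfType) (n : nat) (A : 'M[R]_n) :
  nonneg_mx A -> irreducible_mx A ->
  ((forall t s : R, 0 <= t <= 1 -> 0 <= s <= 1 ->
      spectral_radius ((1 - t) *: A + t *: A^T)
      = spectral_radius ((1 - s) *: A + s *: A^T))
   <->
   (forall x : 'cV[R]_n, perron_vector (A + A^T) x -> (A - A^T) *m x = 0)).
Proof.
move=> A0 irrA; have [n0 | n_gt0] := posnP n.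
  subst n; split=> _ => [x _ | t s _ _]; first exact: flatmx0.
  by rewrite [(1 - t) *: _ + _]flatmx0 [(1 - s) *: _ + _]flatmx0.
split => [r_const x Px | null t s t01 s01].
  have zero01 : 0 <= (0 : R) <= 1 by rewrite lexx ler01.
  have half01 : 0 <= (2^-1 : R) <= 1 by rewrite invr_ge0 ler0n invf_le1 ?ler1n ?ltr0n.
  have := r_const 0 2^-1 zero01 half01.
  rewrite subr0 scale1r scale0r addr0 (spectral_radius_trmx_half n_gt0 A0 Px) => rA.
  by apply: (perron_vector_trmx_null n_gt0 A0 Px irrA); rewrite rA.
have M_sym : (A + A^T)^T = A + A^T by rewrite linearD /= trmxK addrC.
have irrM := irreducible_mxD A0 (nonneg_trmx A0) irrA.
have [x Px] := perron_vector_exists n_gt0 (nonneg_mxD A0 (nonneg_trmx A0)) M_sym irrM.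
by rewrite !(spectral_radius_trmx_comb_null n_gt0 A0 Px (null x Px)).
Qed.
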